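(* If $R$ is a simple compact Hausdorff topological semiring, then $\{0\}$ and $R$ are the only closed subtractive ideals of $R$.
   Context: A semiring is an algebra $(R,+,\cdot,0)$ such that $(R,+,0)$ is a commutative monoid, $(R,\cdot)$ is a semigroup (no multiplicative identity is required), multiplication distributes over addition on both sides, and $0\cdot x = x\cdot 0 = 0$ for all $x\in R$. A topological semiring is a semiring with a topology in which addition and multiplication are continuous. A Hausdorff topological semiring $R$ is called simple if every non-constant continuous semiring homomorphism from $R$ into any Hausdorff topological semiring is injective. An ideal of $R$ is a submonoid $A$ of $(R,+,0)$ with $RA\cup AR\subseteq A$. A subset $A\subseteq R$ is subtractive if for all $x\in R$ and $a\in A$, $x+a\in A$ implies $x\in A$. *)

From HB Require Import structures.
From mathcomp Require Import all_boot all_order.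
From mathcomp Require Import all_classical topology.
Set Implicit Arguments. Unset Strict Implicit. Unset Printing Implicit Defensive.
Local Open Scope classical_set_scope.

Definition is_semiring (T : Type) (add mul : T -> T -> T) (z : T) : Prop :=
  [/\ (forall x y z', add x (add y z') = add (add x y) z'),
      (forall x y, add x y = add y x),
      (forall x, add z x = x),
      (forall x y z', mul x (mul y z') = mul (mul x y) z') &
   [/\
      (forall x y z', mul x (add y z') = add (mul x y) (mul x z')),
      (forall x y z', mul (add x y) z' = add (mul x z') (mul y z')) &
      (forall x, mul z x = z /\ mul x z = z)]].

Definition is_tsemiring (T : topologicalType) (add mul : T -> T -> T) (z : T)
  : Prop :=
  [/\ is_semiring add mul z,
      continuous (fun p : T * T => add p.1 p.2) &
      continuous (fun p : T * T => mul p.1 p.2)].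

Definition is_cont_semiring_hom (R S : topologicalType)
  (addR mulR : R -> R -> R) (zR : R) (addS mulS : S -> S -> S) (zS : S)
  (f : R -> S) : Prop :=
  [/\ continuous f,
      (forall x y, f (addR x y) = addS (f x) (f y)),
      (forall x y, f (mulR x y) = mulS (f x) (f y)) &
      f zR = zS].

Definition simple_tsemiring (R : topologicalType) (add mul : R -> R -> R)
  (z : R) : Prop :=
  [/\ hausdorff_space R, is_tsemiring add mul z &
   forall (S : topologicalType) (addS mulS : S -> S -> S) (zS : S)
          (f : R -> S),
     hausdorff_space S -> is_tsemiring addS mulS zS ->
     is_cont_semiring_hom add mul z addS mulS zS f ->
     (exists x y, f x <> f y) -> injective f].

Definition is_ideal (T : Type) (add mul : T -> T -> T) (z : T) (A : set T)
  : Prop :=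
  [/\ A z,
      (forall a b, A a -> A b -> A (add a b)) &
      (forall r a, A a -> A (mul r a) /\ A (mul a r))].

Definition subtractive (T : Type) (add : T -> T -> T) (A : set T) : Prop :=
  forall x a, A a -> A (add x a) -> A x.

(* For an ideal A, the Bourne relation (x ~ y iff x + a = y + b for some
   a, b in A) is a semiring congruence; when A is subtractive, the class of 0
   is exactly A.  If A is closed and R is compact Hausdorff, the graph of ~ is
   closed, so the quotient map R -> R/~ is a closed map onto a Hausdorff space.
   Hence R/~ is a Hausdorff topological semiring and the quotient map is a
   continuous homomorphism.  It is constant only when A = R; otherwise it is
   injective by simplicity, and A, which it collapses to 0, is {0}. *)

From mathcomp Require Import all_boot all_order.
From mathcomp Require Import all_classical topology.
Set Implicit Arguments. Unset Strict Implicit. Unset Printing Implicit Defensive.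
Local Open Scope classical_set_scope.
Local Open Scope quotient_scope.

Lemma hausdorff_prod (X Y : topologicalType) :
  hausdorff_space X -> hausdorff_space Y -> hausdorff_space (X * Y)%type.
Proof.
move=> hX hY [p1 p2] [q1 q2] cl.
have nbhsX (x : X) (y : Y) B : nbhs x B -> nbhs (x, y) (B `*` setT).
  by move=> nB; exists (B, setT) => //; split => //; exact: filterT.
have nbhsY (x : X) (y : Y) B : nbhs y B -> nbhs (x, y) (setT `*` B).
  by move=> nB; exists (setT, B) => //; split => //; exact: filterT.
congr pair; [apply: hX => B C nB nC|apply: hY => B C nB nC].
- have [[x y] [[/= Bx _] [/= Cx _]]] := cl _ _ (nbhsX _ p2 _ nB) (nbhsX _ q2 _ nC).
  by exists x.
- have [[x y] [[/= _ By] [/= _ Cy]]] := cl _ _ (nbhsY p1 _ _ nB) (nbhsY q1 _ _ nC).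
  by exists y.
Qed.

Lemma continuous_fst (X Y : topologicalType) : continuous (@fst X Y).
Proof. by move=> p; exact: cvg_fst. Qed.

Lemma continuous_snd (X Y : topologicalType) : continuous (@snd X Y).
Proof. by move=> p; exact: cvg_snd. Qed.

Lemma continuous_compose (X Y Z : topologicalType) (f : X -> Y) (g : Y -> Z) :
  continuous f -> continuous g -> continuous (g \o f).
Proof. by move=> cf cg x; apply: continuous_comp; [exact: cf|exact: cg]. Qed.

Lemma closed_diagonal (X : topologicalType) :
  hausdorff_space X -> closed (@diagonal X).
Proof.
move=> hX [p q] clp; apply: hX => A B nA nB.
have : nbhs (p, q) (A `*` B) by exists (A, B).
by move/clp => [[x y] [/diagonalP/= -> [/= Ay By]]]; exists y.
Qed.

Lemma closed_eq (X Y : topologicalType) (f g : X -> Y) :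
  hausdorff_space Y -> continuous f -> continuous g ->
  closed [set x | f x = g x].
Proof.
move=> hY cf cg.
have cfg : continuous (fun x => (f x, g x)).
  by move=> x; apply: cvg_pair; [exact: cf|exact: cg].
change (closed ((fun x => (f x, g x)) @^-1` diagonal)).
exact: (continuous_closedP _).1 cfg _ (closed_diagonal hY).
Qed.

Lemma closed_image_compact (X Y : topologicalType) (f : X -> Y) (C : set X) :
  compact [set: X] -> hausdorff_space Y -> continuous f -> closed C ->
  closed (f @` C).
Proof.
move=> cX hY cf cC; apply: compact_closed hY _.
apply: continuous_compact (continuous_subspaceT cf) _.
exact: subclosed_compact cC cX _.
Qed.

Lemma compact_setXT (X Y : topologicalType) :
  compact [set: X] -> compact [set: Y] -> compact [set: X * Y].
Proof. by move=> cX cY; rewrite -setXTT; exact: compact_setX. Qed.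

Lemma continuous_prod_map (X X' Y Y' : topologicalType)
    (f : X -> X') (g : Y -> Y') :
  continuous f -> continuous g -> continuous (fun p : X * Y => (f p.1, g p.2)).
Proof.
move=> cf cg p; apply: cvg_pair.
  by apply: continuous_comp; [exact: cvg_fst|exact: cf].
by apply: continuous_comp; [exact: cvg_snd|exact: cg].
Qed.

Lemma compact_separate_closed (X : topologicalType) (B C : set X) :
  hausdorff_space X -> compact [set: X] -> closed B -> closed C ->
  B `&` C = set0 ->
  exists U V, [/\ open U, open V, B `<=` U, C `<=` V & U `&` V = set0].
Proof.
move=> hX cX cB cC BC0.
have : set_nbhs B (~` C).
  apply/set_nbhsP; exists (~` C); split => //; first exact: closed_openC.
  by move=> x Bx Cx; rewrite -[False]/(set0 x) -BC0.
move/(compact_normal hX cX cB) => [W nBW clWC].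
have [U [oU BU UW]] := (set_nbhsP _ _).1 nBW.
exists U, (~` closure W); split => //.
- by apply: closed_openC; exact: closed_closure.
- by move=> x Cx /clWC.
- by apply/seteqP; split => // x [/UW/subset_closure].
Qed.

Lemma continuous_surj_factor (X Y Z : topologicalType)
    (f : X -> Y) (g : Y -> Z) :
  compact [set: X] -> hausdorff_space Y -> continuous f ->
  (forall y, exists x, f x = y) -> continuous (g \o f) -> continuous g.
Proof.
move=> cX hY cf fsurj cgf; apply/continuous_closedP => C cC.
have -> : g @^-1` C = f @` ((g \o f) @^-1` C).
  apply/seteqP; split=> [y Cgy|_ [x Cgfx <-] //].
  by have [x fxy] := fsurj y; exists x; rewrite //= fxy.
apply: closed_image_compact => //.
exact: (continuous_closedP _).1 cgf _ cC.
Qed.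

Section closed_equivalence_quotient.
Variables (T : topologicalType) (e : equiv_rel T).
Hypotheses (hT : hausdorff_space T) (cT : compact [set: T])
  (ce : closed [set p : T * T | e p.1 p.2]).

Local Notation Q := (quotient_topology {eq_quot e}).
Local Notation pi := (\pi_Q : T -> Q).

Lemma pi_eqE x y : pi x = pi y <-> e x y.
Proof. by split => [/eqmodP|/eqmodP]. Qed.

Lemma pi_surj (q : Q) : exists x, pi x = q.
Proof. by exists (repr q); exact: reprK. Qed.

Lemma closed_saturation (C : set T) : closed C -> closed (pi @^-1` (pi @` C)).
Proof.
move=> cC.
have -> : pi @^-1` (pi @` C) = fst @` [set p | C p.2 /\ e p.1 p.2].
  apply/seteqP; split => [x [y Cy /pi_eqE eyx]|_ [[x y] [Cy exy] <-]].
    by exists (x, y) => //; split => //=; rewrite equiv_sym.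
  by exists y => //; apply/pi_eqE; rewrite equiv_sym.
apply: closed_image_compact (compact_setXT cT cT) hT (@continuous_fst _ _) _.
apply: closedI ce.
exact: (continuous_closedP _).1 (@continuous_snd _ _) _ cC.
Qed.

Lemma open_classes_within (U : set T) :
  open U -> open [set q : Q | pi @^-1` [set q] `<=` U].
Proof.
move=> oU; rewrite /open /= /quotient_open.
have -> : pi @^-1` [set q : Q | pi @^-1` [set q] `<=` U] =
          ~` (pi @^-1` (pi @` ~` U)).
  apply/seteqP; split => [x sub [y nUy pyx]|x nsat y pyx].
    by apply: nUy; apply: sub.
  by apply: contrapT => nUy; apply: nsat; exists y.
by rewrite openC; apply: closed_saturation; exact: open_closedC.
Qed.

Lemma quotient_hausdorff : hausdorff_space Q.
Proof.
rewrite open_hausdorff => p q /eqP npq.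
have cl1 (r : Q) : closed (pi @^-1` [set r]).
  have -> : pi @^-1` [set r] = pi @^-1` (pi @` [set repr r]).
    apply/seteqP; split => x /= => [->|[_ -> <-]]; last by rewrite reprK.
    by exists (repr r); rewrite ?reprK.
  apply: closed_saturation.
  exact: (accessible_closed_set1 (hausdorff_accessible hT)).
have [U [V [oU oV pU qV UV0]]] : exists U V, [/\ open U, open V,
    pi @^-1` [set p] `<=` U, pi @^-1` [set q] `<=` V & U `&` V = set0].
  apply: (compact_separate_closed hT cT (cl1 p) (cl1 q)).
  by apply/seteqP; split => // x [/= -> pq]; apply: npq.
exists ([set r | pi @^-1` [set r] `<=` U], [set r | pi @^-1` [set r] `<=` V]).
  by split; rewrite inE.
split; [exact: open_classes_within|exact: open_classes_within|].
apply/eqP; apply/seteqP; split => // r [rU rV].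
have [x pxr] := pi_surj r.
suff : (U `&` V) x by rewrite UV0.
by split; [exact: rU|exact: rV].
Qed.

Lemma quotient_op_continuous (op : T -> T -> T) (opQ : Q -> Q -> Q) :
  continuous (fun p : T * T => op p.1 p.2) ->
  (forall x y, opQ (pi x) (pi y) = pi (op x y)) ->
  continuous (fun p : Q * Q => opQ p.1 p.2).
Proof.
move=> cop opE.
pose pi2 (p : T * T) : Q * Q := (pi p.1, pi p.2).
apply: (@continuous_surj_factor _ _ _ pi2 (fun p : Q * Q => opQ p.1 p.2)).
- exact: compact_setXT.
- exact: hausdorff_prod quotient_hausdorff quotient_hausdorff.
- exact: continuous_prod_map pi_continuous pi_continuous.
- move=> [q r]; have [x <-] := pi_surj q; have [y <-] := pi_surj r.
  by exists (x, y).
- have -> : (fun p : Q * Q => opQ p.1 p.2) \o pi2 = pi \o (fun p => op p.1 p.2).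
    by apply/funext => p; rewrite /= opE.
  exact: continuous_compose cop pi_continuous.
Qed.

End closed_equivalence_quotient.

Lemma is_semiring_surj_image (T S : Type) (add mul : T -> T -> T) (z : T)
    (addS mulS : S -> S -> S) (zS : S) (f : T -> S) :
  (forall s, exists x, f x = s) ->
  (forall x y, f (add x y) = addS (f x) (f y)) ->
  (forall x y, f (mul x y) = mulS (f x) (f y)) -> f z = zS ->
  is_semiring add mul z -> is_semiring addS mulS zS.
Proof.
move=> fsurj fD fM <- [addA addC add0 mulA [mulDr mulDl mul0]].
have ind (P : S -> Prop) : (forall x, P (f x)) -> forall s, P s.
  by move=> Pf s; have [x <-] := fsurj s.
split; last split.
- by apply: (ind) => x; apply: (ind) => y; apply: (ind) => w; rewrite -!fD addA.
- by apply: (ind) => x; apply: (ind) => y; rewrite -!fD addC.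
- by apply: (ind) => x; rewrite -fD add0.
- by apply: (ind) => x; apply: (ind) => y; apply: (ind) => w; rewrite -!fM mulA.
- apply: (ind) => x; apply: (ind) => y; apply: (ind) => w.
  by rewrite -fD -!fM -fD mulDr.
- apply: (ind) => x; apply: (ind) => y; apply: (ind) => w.
  by rewrite -fD -!fM -fD mulDl.
- by apply: (ind) => x; rewrite -!fM (mul0 x).1 (mul0 x).2.
Qed.

Definition bourne (T : Type) (add : T -> T -> T) (A : set T) (x y : T) : Prop :=
  exists a b, [/\ A a, A b & add x a = add y b].

Section bourne_congruence.
Variables (T : Type) (add mul : T -> T -> T) (z : T) (A : set T).
Hypotheses (sr : is_semiring add mul z) (idA : is_ideal add mul z A).

Local Notation "x ~ y" := (bourne add A x y) (at level 70).

Lemma bourne_refl x : x ~ x.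
Proof. by case: idA => Az _ _; exists z, z. Qed.

Lemma bourne_sym x y : x ~ y -> y ~ x.
Proof. by move=> [a [b [Aa Ab e]]]; exists b, a. Qed.

Lemma bourne_trans x y w : x ~ y -> y ~ w -> x ~ w.
Proof.
case: sr => addA addC _ _ _; case: idA => _ AD _.
move=> [a [b [Aa Ab e1]]] [c [d [Ac Ad e2]]].
exists (add a c), (add d b); split; [exact: AD|exact: AD|].
by rewrite addA e1 -addA (addC b c) addA e2 -addA.
Qed.

Lemma bourneD x x' y y' : x ~ x' -> y ~ y' -> add x y ~ add x' y'.
Proof.
case: sr => addA addC _ _ _; case: idA => _ AD _.
have addACA u v u' v' : add (add u v) (add u' v') = add (add u u') (add v v').
  by rewrite -!addA (addA v) (addC v u') !addA.
move=> [a [b [Aa Ab e1]]] [c [d [Ac Ad e2]]].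
exists (add a c), (add b d); split; [exact: AD|exact: AD|].
by rewrite addACA [RHS]addACA e1 e2.
Qed.

Lemma bourneM x x' y y' : x ~ x' -> y ~ y' -> mul x y ~ mul x' y'.
Proof.
case: (sr) => _ _ _ _ [mulDr mulDl _]; case: idA => _ _ AM.
move=> [a [b [Aa Ab e1]]] [c [d [Ac Ad e2]]].
apply: (@bourne_trans _ (mul x' y)).
  exists (mul a y), (mul b y); rewrite -!mulDl e1.
  by split; [exact: (AM _ _ Aa).2|exact: (AM _ _ Ab).2|].
exists (mul x' c), (mul x' d); rewrite -!mulDr e2.
by split; [exact: (AM _ _ Ac).1|exact: (AM _ _ Ad).1|].
Qed.

Lemma bourne_ideal a : A a -> a ~ z.
Proof. by case: sr => _ addC _ _ _; case: idA => Az _ _; exists z, a. Qed.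

Lemma subtractive_bourne_zero x : subtractive add A -> x ~ z -> A x.
Proof.
case: sr => _ _ add0 _ _ sub [a [b [Aa Ab e]]].
by apply: (sub x a Aa); rewrite e add0.
Qed.

End bourne_congruence.

Lemma closed_bourne (R : topologicalType) (add : R -> R -> R) (A : set R) :
  hausdorff_space R -> compact [set: R] ->
  continuous (fun p : R * R => add p.1 p.2) -> closed A ->
  closed [set p : R * R | bourne add A p.1 p.2].
Proof.
move=> hR cR cadd cA.
pose G := [set u : (R * R) * (R * R) | [/\ A u.2.1, A u.2.2 &
  add u.1.1 u.2.1 = add u.1.2 u.2.2]].
have -> : [set p : R * R | bourne add A p.1 p.2] = fst @` G.
  apply/seteqP; split => [[x y] [a [b [Aa Ab e]]]|_ [[[x y] [a b]] [Aa Ab e] <-]].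
    by exists ((x, y), (a, b)).
  by exists a, b.
have cRR := compact_setXT cR cR.
apply: closed_image_compact (compact_setXT cRR cRR) (hausdorff_prod hR hR)
  (@continuous_fst _ _) _.
have cA2 (g : (R * R) * (R * R) -> R) : continuous g -> closed (g @^-1` A).
  by move=> cg; exact: (continuous_closedP _).1 cg _ cA.
have -> : G = (fun u => u.2.1) @^-1` A `&` (fun u => u.2.2) @^-1` A `&`
    [set u | add u.1.1 u.2.1 = add u.1.2 u.2.2].
  by apply/seteqP; split => u [] //; case.
apply: closedI; first apply: closedI.
- exact/cA2/continuous_compose/continuous_fst/continuous_snd.
- exact/cA2/continuous_compose/continuous_snd/continuous_snd.
- apply: closed_eq hR _ _.
  + have cfst2 := continuous_prod_map (@continuous_fst R R) (@continuous_fst R R).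
    exact: continuous_compose cfst2 cadd.
  + have csnd2 := continuous_prod_map (@continuous_snd R R) (@continuous_snd R R).
    exact: continuous_compose csnd2 cadd.
Qed.

Section bourne_quotient.
Variables (R : topologicalType) (add mul : R -> R -> R) (z : R) (A : set R).
Hypotheses (sr : is_semiring add mul z) (idA : is_ideal add mul z A).

Definition bourneb x y := `[< bourne add A x y >].

Lemma bourneb_refl : reflexive bourneb.
Proof. by move=> x; apply/asboolP; exact: bourne_refl idA x. Qed.

Lemma bourneb_sym : symmetric bourneb.
Proof. by move=> x y; apply/asboolP/asboolP; exact: bourne_sym. Qed.

Lemma bourneb_trans : transitive bourneb.
Proof.
move=> y x w /asboolP xy /asboolP yw; apply/asboolP.
exact: bourne_trans sr idA x y w xy yw.
Qed.

Definition bourne_equiv := EquivRel bourneb bourneb_refl bourneb_sym bourneb_trans.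

Local Notation S := (quotient_topology {eq_quot bourne_equiv}).
Local Notation pi := (\pi_S : R -> S).

Definition bourne_add (p q : S) : S := pi (add (repr p) (repr q)).
Definition bourne_mul (p q : S) : S := pi (mul (repr p) (repr q)).

Lemma pi_bourneE x y : pi x = pi y <-> bourne add A x y.
Proof. by rewrite pi_eqE; split => /asboolP. Qed.

Lemma bourne_repr x : bourne add A (repr (pi x)) x.
Proof. by apply/pi_bourneE; rewrite reprK. Qed.

Lemma bourne_addE x y : bourne_add (pi x) (pi y) = pi (add x y).
Proof.
apply/pi_bourneE.
exact: bourneD sr idA _ _ _ _ (bourne_repr x) (bourne_repr y).
Qed.

Lemma bourne_mulE x y : bourne_mul (pi x) (pi y) = pi (mul x y).
Proof.
apply/pi_bourneE.
exact: bourneM sr idA _ _ _ _ (bourne_repr x) (bourne_repr y).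
Qed.

Hypotheses (hR : hausdorff_space R) (cR : compact [set: R]) (cA : closed A)
  (cadd : continuous (fun p : R * R => add p.1 p.2))
  (cmul : continuous (fun p : R * R => mul p.1 p.2)).

Lemma closed_bourne_equiv : closed [set p : R * R | bourne_equiv p.1 p.2].
Proof.
have -> : [set p : R * R | bourne_equiv p.1 p.2] = [set p | bourne add A p.1 p.2].
  by apply/seteqP; split => p /asboolP.
exact: closed_bourne.
Qed.

Lemma bourne_quotient_hausdorff : hausdorff_space S.
Proof. exact: quotient_hausdorff hR cR closed_bourne_equiv. Qed.

Lemma bourne_quotient_tsemiring : is_tsemiring bourne_add bourne_mul (pi z).
Proof.
split.
- apply: is_semiring_surj_image sr => //; first exact: pi_surj.
    by move=> x y; rewrite bourne_addE.
  by move=> x y; rewrite bourne_mulE.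
- exact: quotient_op_continuous hR cR closed_bourne_equiv _ _ cadd bourne_addE.
- exact: quotient_op_continuous hR cR closed_bourne_equiv _ _ cmul bourne_mulE.
Qed.

Lemma pi_bourne_hom :
  is_cont_semiring_hom add mul z bourne_add bourne_mul (pi z) pi.
Proof.
split => // [|x y|x y]; first exact: pi_continuous.
- by rewrite bourne_addE.
- by rewrite bourne_mulE.
Qed.

End bourne_quotient.

Theorem corollary4p3 (R : topologicalType) (add mul : R -> R -> R) (z : R) :
  simple_tsemiring add mul z ->
  compact [set: R] ->
  forall A : set R,
    closed A -> is_ideal add mul z A -> subtractive add A ->
    A = [set z] \/ A = [set: R].
Proof.
move=> [hR [sr cadd cmul] simple] cR A cA idA sub.
have [->|/setTPn [x0 nAx0]] := eqVneq A setT; [by right|left].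
pose pi := \pi_(quotient_topology {eq_quot bourne_equiv sr idA}) : R -> _.
have pi_inj : injective pi.
  apply: (simple _ _ _ _ pi).
  - exact: bourne_quotient_hausdorff.
  - exact: bourne_quotient_tsemiring.
  - exact: pi_bourne_hom.
  - exists x0, z => /pi_bourneE x0z.
    exact: nAx0 (subtractive_bourne_zero sr sub x0z).
apply/seteqP; split=> [a Aa|_ ->]; last by case: (idA).
by apply: pi_inj; apply/pi_bourneE; exact: bourne_ideal sr idA a Aa.
Qed.
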